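(* Let $\Gamma$ be a group, $\alpha\in\mathrm{Aut}(\Gamma)$ and $\omega(g,h)=\alpha(g)$. Viewing elements $a\in K(\omega)$ as maps $\mathbb Q_2\to\Gamma$ via $a(x):=\alpha^{|u|}(a(u))$ for $x=u00\cdots$, for all $v\in V$, $a\in K(\omega)$ and $x\in\mathbb Q_2$ we have $$\pi(v)(a)(x)=\alpha^{-\log_2(v'(v^{-1}x))}\big(a(v^{-1}x)\big).$$
   Context: $\{0,1\}^*$ denotes the finite words over $\{0,1\}$ (including the empty word), $|u|$ the length; $\mathfrak C=\{0,1\}^{\mathbb N}$; $\mathbb Q_2\subset\mathfrak C$ is the set of eventually-zero sequences $u00\cdots$ ($u\in\{0,1\}^*$). The value $\alpha^{|u|}(a(u))$ does not depend on the choice of $u$ with $x=u00\cdots$, and $a\mapsto(x\mapsto a(x))$ is an isomorphism $K(\omega)\to\prod_{\mathbb Q_2}\Gamma$. A finite complete prefix code is a finite set $\{t_1,\dots,t_n\}\subset\{0,1\}^*$ such that every $x\in\mathfrak C$ has exactly one $t_i$ as prefix. Thompson's group $V$ is the group of homeomorphisms $v$ of $\mathfrak C$ for which there exist finite complete prefix codes $\{t_i\},\{s_i\}$ and a permutation $\sigma$ with $v(t_iw)=s_{\sigma(i)}w$ for all $i$, $w\in\mathfrak C$; for such a representation and $y\in\mathfrak C$ with prefix $t_i$, the slope is $v'(y):=2^{|t_i|-|s_{\sigma(i)}|}$. $K(\omega)$ is the group of maps $a:\{0,1\}^*\to\Gamma$ with $a(u)=\omega(a(u0),a(u1))$, and $V$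 acts on it by $\pi(v)(a)(s_{\sigma(i)}u)=a(t_iu)$ for all $i$, $u\in\{0,1\}^*$ (this determines $\pi(v)(a)\in K(\omega)$ uniquely). *)

From mathcomp Require Import all_boot monoid ssralg ssrint.
Set Implicit Arguments. Unset Strict Implicit. Unset Printing Implicit Defensive.

(* Finite words over {0,1}: [seq bool] (false = 0, true = 1).
   Cantor space C = {0,1}^N : [nat -> bool]. *)
Definition word := seq bool.
Definition cantor := nat -> bool.

Definition wcat (u : word) (w : cantor) : cantor :=
  fun n => if n < size u then nth false u n else w (n - size u).

(* u00... : the eventually-zero sequence determined by u (elements of Q_2) *)
Definition ezero (u : word) : cantor := wcat u (fun _ => false).

Definition is_prefix (u : word) (x : cantor) : bool :=
  all (fun i => nth false u i == x i) (iota 0 (size u)).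

Definition complete_prefix_code (ts : seq word) : Prop :=
  forall x : cantor, exists! i, i < size ts /\ is_prefix (nth [::] ts i) x.

(* A representation of v in Thompson's group V: a list of pairs
   (t_i, s_{sigma(i)}) such that {t_i} and {s_sigma(i)} are finite complete
   prefix codes, and v (t_i w) = s_sigma(i) w for all i and w. *)
Definition V_rep (v : cantor -> cantor) (R : seq (word * word)) : Prop :=
  [/\ complete_prefix_code (map fst R),
      complete_prefix_code (map snd R) &
      forall p w, p \in R -> v (wcat p.1 w) = wcat p.2 w].

Definition rep_pair (R : seq (word * word)) (y : cantor) : word * word :=
  nth ([::], [::]) R (find (fun p => is_prefix p.1 y) R).

(* log_2 of the slope v'(y) = 2^(|t_i| - |s_sigma(i)|), t_i the prefix of y *)
Definition log2_slope (R : seq (word * word)) (y : cantor) : int :=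
  (size (rep_pair R y).1)%:Z - (size (rep_pair R y).2)%:Z.

Definition autpow (G : Type) (alpha alphai : G -> G) (n : int) : G -> G :=
  match n with
  | Posz k => iter k alpha
  | Negz k => iter k.+1 alphai
  end.

Definition inK (G : Type) (omega : G -> G -> G) (a : word -> G) : Prop :=
  forall u, a u = omega (a (rcons u false)) (a (rcons u true)).

(* b = pi(v)(a) via the representation R: b(s_sigma(i) u) = a(t_i u) *)
Definition is_pi (G : Type) (omega : G -> G -> G) (R : seq (word * word))
  (a b : word -> G) : Prop :=
  inK omega b /\ forall p u, p \in R -> b (p.2 ++ u) = a (p.1 ++ u).

(* value of a in K(omega) at x = u00... in Q_2 : alpha^{|u|}(a(u)) *)
Definition Kval (G : Type) (alpha : G -> G) (a : word -> G) (u : word) : G :=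
  iter (size u) alpha (a u).

From mathcomp Require Import all_boot monoid ssralg ssrint.
From Stdlib Require Import FunctionalExtensionality.

Set Implicit Arguments.
Unset Strict Implicit.
Unset Printing Implicit Defensive.

(* A point y lies in exactly one cylinder t_i C, where v acts as t_i w |-> s_i w.
   If v y = u00..., then w = z00... for the tail z of u beyond s_i, so
   y = t_i z00...  By the defining relation of b, b(s_i z) = a(t_i z), hence
   the value of b at u00... is alpha^(|s_i|+|z|)(a(t_i z)) while the value of a
   at y is alpha^(|t_i|+|z|)(a(t_i z)): they differ by alpha^(|s_i|-|t_i|), and
   |s_i| - |t_i| = -log2 v'(y).  The relation a(u) = alpha(a(u0)) makes these
   values independent of trailing zeros, so they are well defined on Q_2. *)

Lemma ezeroE u n : ezero u n = nth false u n.
Proof.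
by rewrite /ezero /wcat; case: ltnP => // le_u_n; rewrite nth_default.
Qed.

Lemma wcat_ezero s z : wcat s (ezero z) = ezero (s ++ z).
Proof.
apply: functional_extensionality => n.
by rewrite ezeroE /wcat nth_cat; case: ifP => // _; rewrite ezeroE.
Qed.

Lemma wcat_eq_ezero s w u : wcat s w = ezero u -> w = ezero (drop (size s) u).
Proof.
move=> swE; apply: functional_extensionality => n.
by rewrite ezeroE nth_drop -ezeroE -swE /wcat ltnNge leq_addr /= addKn.
Qed.

Lemma is_prefix_nth s x :
  is_prefix s x -> forall n, n < size s -> nth false s n = x n.
Proof. by move=> /allP sx n ltns; apply/eqP/sx; rewrite mem_iota. Qed.

Lemma is_prefix_wcat s x : is_prefix s x -> x = wcat s (fun n => x (n + size s)).
Proof.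
move=> sx; apply: functional_extensionality => n; rewrite /wcat.
case: ltnP => [ltns | lesn]; first by rewrite (is_prefix_nth sx).
by rewrite subnK.
Qed.

Lemma rep_pairP (R : seq (word * word)) y :
  complete_prefix_code (map fst R) ->
  rep_pair R y \in R /\ is_prefix (rep_pair R y).1 y.
Proof.
move=> code_t.
have hasR : has (fun p : word * word => is_prefix p.1 y) R.
  have [i [[ltiR iy] _]] := code_t y; rewrite size_map in ltiR.
  by apply/hasP; exists (nth ([::], [::]) R i); rewrite ?mem_nth -?(nth_map _ [::]).
by split; [apply: mem_nth; rewrite -has_find | apply: (nth_find _ hasR)].
Qed.

Section KvalWellDefined.

Variables (G : Type) (alpha : G -> G) (a : word -> G).
Hypothesis Ha : inK (fun g _ => alpha g) a.

Lemma Kval_nseq0 u k : Kval alpha a (u ++ nseq k false) = Kval alpha a u.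
Proof.
elim: k => [|k IHk]; first by rewrite cats0.
by rewrite -IHk -addn1 nseqD catA cats1 /Kval size_rcons iterSr -Ha.
Qed.

Lemma Kval_ezero u1 u2 : ezero u1 = ezero u2 -> Kval alpha a u1 = Kval alpha a u2.
Proof.
wlog le_u12 : u1 u2 / size u1 <= size u2.
  move=> W u12E; case: (leqP (size u1) (size u2)) => [le_u12 | /ltnW le_u21].
    exact: W.
  by rewrite (W u2 u1).
move=> u12E.
have -> : u2 = u1 ++ nseq (size u2 - size u1) false.
  apply: (@eq_from_nth _ false); first by rewrite size_cat size_nseq subnKC.
  move=> i _; rewrite -ezeroE -u12E ezeroE nth_cat nth_nseq if_same.
  by case: ltnP => // le_u1_i; rewrite nth_default.
by rewrite Kval_nseq0.
Qed.

End KvalWellDefined.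

Lemma iter_can (T : Type) (f g : T -> T) n : cancel f g -> cancel (iter n f) (iter n g).
Proof. by move=> fK; elim: n => // n IHn x; rewrite iterSr iterS fK. Qed.

Lemma autpow_subz_iter (G : Type) (alpha alphai : G -> G) :
  cancel alpha alphai ->
  forall k m x, autpow alpha alphai (k%:Z - m%:Z)%R (iter m alpha x) = iter k alpha x.
Proof.
move=> alphaK k m x; case: (leqP m k) => [le_mk | lt_km].
  by rewrite subzn //= -iterD subnK.
have -> : (k%:Z - m%:Z)%R = Negz (m - k).-1.
  by rewrite NegzE prednK ?subn_gt0 // -GRing.opprB subzn // ltnW.
have -> : iter m alpha x = iter (m - k) alpha (iter k alpha x).
  by rewrite -iterD subnK // ltnW.
by rewrite /autpow prednK ?subn_gt0 //; apply: iter_can.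
Qed.

Lemma Kval_pi (G : Type) (alpha alphai : G -> G) (alphaK : cancel alpha alphai)
  (R : seq (word * word)) (a b : word -> G) :
  (forall p u, p \in R -> b (p.2 ++ u) = a (p.1 ++ u)) ->
  forall p z, p \in R ->
  Kval alpha b (p.2 ++ z) =
  autpow alpha alphai ((size p.2)%:Z - (size p.1)%:Z)%R (Kval alpha a (p.1 ++ z)).
Proof.
move=> bE p z pR.
by rewrite /Kval bE // !size_cat !iterD autpow_subz_iter.
Qed.

Theorem mainTheorem7
  (Gamma : groupType) (alpha alphai : Gamma -> Gamma)
  (alpha_morph : monoid_morphism alpha)
  (alphaK : cancel alpha alphai) (alphaiK : cancel alphai alpha)
  (v : cantor -> cantor) (R : seq (word * word)) (HR : V_rep v R)
  (a b : word -> Gamma)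
  (Ha : inK (fun g h => alpha g) a)
  (Hb : is_pi (fun g h => alpha g) R a b)
  (u : word) (y : cantor) (Hy : v y = ezero u) :
  exists u' : word, y = ezero u' /\
    Kval alpha b u =
    autpow alpha alphai (- log2_slope R y)%R (Kval alpha a u').
Proof.
case: HR => code_t _ vE; case: Hb => HbK bE.
rewrite /log2_slope GRing.opprB; have [pR py] := rep_pairP y code_t.
set p := rep_pair R y in pR py *.
have yE := is_prefix_wcat py; set w := fun n => _ in yE.
have wE : w = ezero (drop (size p.2) u).
  by apply: wcat_eq_ezero; rewrite -vE // -yE.
set z := drop (size p.2) u in wE.
exists (p.1 ++ z); split; first by rewrite yE wE wcat_ezero.
have uE : ezero u = ezero (p.2 ++ z) by rewrite -Hy yE vE // wE wcat_ezero.
by rewrite (Kval_ezero HbK uE) (Kval_pi alphaK bE).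
Qed.
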